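(* Let $T\ge 1$ and $d\ge 1$ be integers, let $\gamma>0$ and $\beta>0$, and for each task $t\in\{1,\dots,T\}$ let $(x_{t1},y_{t1}),\dots,(x_{tm_t},y_{tm_t})\in\mathbb{R}^d\times\mathbb{R}$ be given data. Let $l:\mathbb{R}\times\mathbb{R}\to\mathbb{R}$ be a loss function that is convex in its second argument. Consider the (non-convex) problem $$\text{(P)}\qquad \min_{A\in\mathbb{R}^{d\times T},\,a_0\in\mathbb{R}^d,\,U\in O^d}\ \sum_{t=1}^{T}\sum_{i=1}^{m_t} l\big(y_{ti},\langle a_t+a_0,U^Tx_{ti}\rangle\big)+\frac{\gamma}{T}\|A\|_{2,1}^2+\beta\|a_0\|_2^2,$$ where $A=[a_1,\dots,a_T]$, and the problem $$\text{(C)}\qquad \min_{W\in\mathbb{R}^{d\times T},\,w_0\in\mathbb{R}^d,\,D}\ \sum_{t=1}^{T}\sum_{i=1}^{m_t} l\big(y_{ti},\langle w_t+w_0,x_{ti}\rangle\big)+\frac{\gamma}{T}\sum_{t=1}^T\langle w_t,D^+w_t\rangle+\beta\langle w_0,w_0\rangle$$ subject to $\operatorname{trace}(D)\le 1$, $\operatorname{range}(W)\subseteq\operatorname{range}(D)$, $D\in S_+^d$, where $W=[w_1,\dots,w_T]$. Then (C) is a convex optimization problem equivalent to (P) in the following sense. If $(\hat W,\hat w_0,\hat D)$ is an optimal solution of (C) and the columns of $\hat U$ form an orthonormal basis of eigenvectors of $\hat D$, then $(\hat A,\hat a_0,\hat U)$ with $\hat A=\hat U^T\hat W$, $\hat a_0=\hat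 U^T\hat w_0$ is an optimal solution of (P). Conversely, if $(\hat A,\hat a_0,\hat U)$ is an optimal solution of (P), then $\hat W=\hat U\hat A$, $\hat w_0=\hat U\hat a_0$, $\hat D=\hat U\,\mathrm{Diag}\!\left(\frac{\|\hat a^i\|_2}{\|\hat A\|_{2,1}}\right)_{i=1}^d\hat U^T$ is an optimal solution of (C), where $\hat a^i$ denotes the $i$-th row of $\hat A$.
   Context: $O^d$ denotes the set of $d\times d$ orthogonal matrices ($U^TU=I$). For a matrix $A\in\mathbb{R}^{d\times T}$ with rows $a^1,\dots,a^d$, $\|A\|_{2,1}=\sum_{i=1}^d\|a^i\|_2$. $S_+^d$ is the set of $d\times d$ symmetric positive semidefinite matrices; $D^+$ is the Moore–Penrose pseudoinverse of $D$; $\operatorname{range}(W)=\{Wz: z\in\mathbb{R}^T\}$; $\mathrm{Diag}(v_i)_{i=1}^d$ is the diagonal matrix with diagonal entries $v_1,\dots,v_d$. *)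

From HB Require Import structures.
From mathcomp Require Import all_boot all_order all_algebra.
From mathcomp Require Import reals.
From Stdlib Require Import ClassicalEpsilon.
Set Implicit Arguments. Unset Strict Implicit. Unset Printing Implicit Defensive.
Import Order.TTheory GRing.Theory Num.Theory.
Local Open Scope ring_scope.

Section Defs.
Variable R : realType.

Definition dotv n (u v : 'cV[R]_n) : R := \sum_(i < n) u i 0 * v i 0.

Definition rownorm d T (A : 'M[R]_(d, T)) (i : 'I_d) : R :=
  Num.sqrt (\sum_(j < T) A i j ^+ 2).

Definition norm21 d T (A : 'M[R]_(d, T)) : R := \sum_(i < d) rownorm A i.

Definition orthogonal_mx d (U : 'M[R]_d) : Prop := U^T *m U = 1%:M.

Definition psd d (D : 'M[R]_d) : Prop :=
  D^T = D /\ forall v : 'cV[R]_d, 0 <= (v^T *m D *m v) 0 0.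

(* Moore-Penrose conditions; the pseudoinverse is the (unique) matrix
   satisfying them (existence/uniqueness is a standard theorem). *)
Definition penrose m n (D : 'M[R]_(m, n)) (X : 'M[R]_(n, m)) : Prop :=
  [/\ D *m X *m D = D, X *m D *m X = X,
      (D *m X)^T = D *m X & (X *m D)^T = X *m D].

Definition pinv m n (D : 'M[R]_(m, n)) : 'M[R]_(n, m) :=
  epsilon (inhabits 0) (penrose D).

Definition range_sub d T (W : 'M[R]_(d, T)) (D : 'M[R]_d) : Prop :=
  forall z : 'cV[R]_T, exists v : 'cV[R]_d, W *m z = D *m v.

Definition convex_in_2nd (l : R -> R -> R) : Prop :=
  forall (yv u v lam : R), 0 <= lam <= 1 ->
    l yv (lam * u + (1 - lam) * v) <= lam * l yv u + (1 - lam) * l yv v.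

Unset Implicit Arguments.
Variables (T d : nat) (m : 'I_T -> nat)
  (x : forall t : 'I_T, 'I_(m t) -> 'cV[R]_d)
  (y : forall t : 'I_T, 'I_(m t) -> R)
  (l : R -> R -> R) (gamma beta : R).

Definition objP (A : 'M[R]_(d, T)) (a0 : 'cV[R]_d) (U : 'M[R]_d) : R :=
  \sum_(t < T) \sum_(i < m t) l (y t i) (dotv (col t A + a0) (U^T *m x t i))
  + gamma / T%:R * norm21 A ^+ 2 + beta * dotv a0 a0.

Definition optimalP A a0 U : Prop :=
  orthogonal_mx U /\
  forall A' a0' U', orthogonal_mx U' -> objP A a0 U <= objP A' a0' U'.

Definition objC (W : 'M[R]_(d, T)) (w0 : 'cV[R]_d) (D : 'M[R]_d) : R :=
  \sum_(t < T) \sum_(i < m t) l (y t i) (dotv (col t W + w0) (x t i))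
  + gamma / T%:R * (\sum_(t < T) dotv (col t W) (pinv D *m col t W))
  + beta * dotv w0 w0.

Definition feasibleC (W : 'M[R]_(d, T)) (w0 : 'cV[R]_d) (D : 'M[R]_d) : Prop :=
  \tr D <= 1 /\ range_sub W D /\ psd D.

Definition optimalC W w0 D : Prop :=
  feasibleC W w0 D /\
  forall W' w0' D', feasibleC W' w0' D' -> objC W w0 D <= objC W' w0' D'.

Definition convex_problemC : Prop :=
  forall W1 w1 D1 W2 w2 D2 (lam : R),
    feasibleC W1 w1 D1 -> feasibleC W2 w2 D2 -> 0 <= lam <= 1 ->
    feasibleC (lam *: W1 + (1 - lam) *: W2) (lam *: w1 + (1 - lam) *: w2)
              (lam *: D1 + (1 - lam) *: D2) /\
    objC (lam *: W1 + (1 - lam) *: W2) (lam *: w1 + (1 - lam) *: w2)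
         (lam *: D1 + (1 - lam) *: D2)
    <= lam * objC W1 w1 D1 + (1 - lam) * objC W2 w2 D2.

End Defs.

(* Diagonalize a feasible D of (C) as U Diag(a) U^T with a >= 0 and sum a <= 1, and
   write W = D V (the range constraint).  Then U^T W = Diag(a) U^T V, so the rows of
   A = U^T W have norms a_i s_i with s_i = ||(U^T V)^i||, while the penalty of (C) is
   sum_t <w_t, D^+ w_t> = sum_i a_i s_i^2.  Jensen's inequality for the weights a gives
   ||A||_{2,1}^2 = (sum_i a_i s_i)^2 <= sum_i a_i s_i^2, so (P) at (U^T W, U^T w0, U)
   is at most (C) at (W, w0, D); the data terms agree since U is orthogonal.
   Conversely, the weights a_i = ||a^i|| / ||A||_{2,1} of \hat D attain equality, so
   (C) at (U A, U a0, \hat D) equals (P) at (A, a0, U).  Convexity of (C) reduces, term by term, to the joint convexity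
   of (D, D v) |-> v^T D v over psd D. *)

From HB Require Import structures.
From mathcomp Require Import all_boot all_order all_algebra.
From mathcomp Require Import reals.
From mathcomp.real_closed Require Import complex.
From mathcomp Require Import ring lra.
From Stdlib Require Import ClassicalEpsilon.
Set Implicit Arguments. Unset Strict Implicit. Unset Printing Implicit Defensive.
Import Order.TTheory GRing.Theory Num.Theory.
Local Open Scope ring_scope.

Lemma jensen_sqr (R : realFieldType) n (a s : 'I_n -> R) :
  (forall i, 0 <= a i) -> \sum_i a i <= 1 ->
  (\sum_i a i * s i) ^+ 2 <= \sum_i a i * s i ^+ 2.
Proof.
move=> a_ge0 sum_a_le1; set P := \sum_i a i * s i.
have var_ge0 : 0 <= \sum_i a i * (s i - P) ^+ 2.
  by rewrite sumr_ge0 // => i _; rewrite mulr_ge0 ?sqr_ge0.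
have varE : \sum_i a i * (s i - P) ^+ 2
    = \sum_i a i * s i ^+ 2 - 2 * P * P + P ^+ 2 * \sum_i a i.
  rewrite (eq_bigr (fun i => a i * s i ^+ 2 - 2 * P * (a i * s i) + P ^+ 2 * a i)).
    by rewrite big_split sumrB -!mulr_sumr.
  by move=> i _; ring.
rewrite varE in var_ge0.
have : 0 <= P ^+ 2 * (1 - \sum_i a i) by rewrite mulr_ge0 ?sqr_ge0 ?subr_ge0.
lra.
Qed.

Lemma ler_sum_comb (R : numDomainType) (I : finType) (a b : R) (F G H : I -> R) :
  (forall i, F i <= a * G i + b * H i) ->
  \sum_i F i <= a * \sum_i G i + b * \sum_i H i.
Proof. by move=> FGH; rewrite !mulr_sumr -big_split; apply: ler_sum. Qed.

Section RealSpectral.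
Variable R : rcfType.

Lemma trmx_mul_self_gt0 n (w : 'cV[R]_n) : w != 0 -> 0 < (w^T *m w) 0 0.
Proof.
have sqr_ge0 j : 0 <= w^T 0 j * w j 0 by rewrite mxE -expr2 sqr_ge0.
move=> w_neq0; rewrite mxE lt0r sumr_ge0 ?andbT //.
apply: contra w_neq0 => /eqP/(psumr_eq0P (fun j _ => sqr_ge0 j)) w0.
apply/eqP/colP => j; have /eqP := w0 j isT.
by rewrite mxE mulf_eq0 orbb mxE => /eqP.
Qed.

Lemma trmx_mul_self_eq0 n (w : 'cV[R]_n) : (w^T *m w) 0 0 = 0 -> w = 0.
Proof. by have [//|/trmx_mul_self_gt0] := eqVneq w 0; rewrite lt0r => /andP[/eqP]. Qed.

(* The complexification of [D] is Hermitian, so the diagonal of its spectral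
   decomposition is real; each of its entries is an eigenvalue of [D]. *)
Lemma symmetric_eigenvalue n (D : 'M[R]_n.+1) :
  D^T = D -> exists a, eigenvalue D a.
Proof.
move=> Dsym; pose DC := map_mx (real_complex R) D.
have DCherm : DC \is hermsymmx.
  apply: realsym_hermsym.
    by apply/is_hermitianmxP; rewrite expr0 scale1r map_mx_id // map_trmx Dsym.
  by apply/mxOverP => i j; rewrite mxE; apply/complex_realP; exists (D i j).
have /orthomx_spectralP DCE := hermitian_normalmx DCherm.
set P := spectralmx DC in DCE; set sp := spectral_diag DC in DCE.
have Punit : P \in unitmx by apply: spectral_unit.
have sp_real : sp 0 0 \is Num.real.
  exact: mxOverP (hermitian_spectral_diag_real DCherm) 0 0.
exists (complex.Re (sp 0 0)); rewrite -(eigenvalue_map (real_complex R)) /= RRe_real // -/DC.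
apply/eigenvalueP; exists (row 0 P).
  rewrite -row_mul DCE !mulmxA mulmxV // mul1mx.
  by rewrite row_mul row_diag_mx -scalemxAl -rowE.
apply/negP => /eqP P0.
have /rowP/(_ 0) := row_mul 0 P (invmx P).
by rewrite P0 mul0mx mulmxV // row1 !mxE !eqxx => /eqP; rewrite pnatr_eq0.
Qed.

Lemma symmetric_unit_eigenvector n (D : 'M[R]_n.+1) : D^T = D ->
  exists2 u : 'cV_n.+1, u^T *m u = 1%:M & exists mu, D *m u = mu *: u.
Proof.
move=> Dsym; have [mu /eigenvalueP [v vD v_neq0]] := symmetric_eigenvalue Dsym.
have q_gt0 : 0 < (v *m v^T) 0 0.
  by have := @trmx_mul_self_gt0 _ v^T; rewrite trmxK trmx_eq0; apply.
pose k := (Num.sqrt ((v *m v^T) 0 0))^-1.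
exists (k *: v^T); last first.
  exists mu; rewrite -scalemxAr -[D]Dsym -trmx_mul vD.
  by rewrite linearZ /= scalerA mulrC -scalerA.
rewrite !linearZ /= trmxK -scalemxAl scalerA [v *m v^T]mx11_scalar.
rewrite -scalemx1 scalerA -expr2 exprVn sqr_sqrtr ?ltW //.
by rewrite mulVf ?scale1r // gt_eqF.
Qed.

(* The reflection [1 - 2 w w^T / (w^T w)] with [w = e_0 - u] swaps [e_0] and [u]. *)
Lemma householder n (u : 'cV[R]_n.+1) : u^T *m u = 1%:M ->
  exists H : 'M[R]_n.+1, [/\ H^T = H, H *m H = 1%:M & H *m delta_mx 0 0 = u].
Proof.
move=> uu; pose e : 'cV[R]_n.+1 := delta_mx 0 0; pose w := e - u.
pose s := (w^T *m w) 0 0; pose c := 2 / s; pose p := u 0 0.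
have ee : e^T *m e = 1%:M by rewrite -colE; apply/matrixP => i j; rewrite !ord1 !mxE.
have eu : e^T *m u = p%:M.
  by rewrite trmx_delta -rowE; apply/matrixP => i j; rewrite !ord1 !mxE.
have ue : u^T *m e = p%:M by rewrite -colE; apply/matrixP => i j; rewrite !ord1 !mxE.
have we : w^T *m e = (1 - p)%:M by rewrite /w linearB /= mulmxDl mulNmx ee ue raddfB.
have sE : s = 2 * (1 - p).
  have wT : w^T = e^T - u^T by rewrite /w linearB.
  by rewrite /s wT !mulmxDl !mulNmx !mulmxDr !mulmxN ee eu ue uu !mxE /=; ring.
exists (1%:M - c *: (w *m w^T)); split.
- by rewrite linearB /= linearZ /= trmx_mul trmxK trmx1.
- rewrite mulmxBl !mulmxBr mul1mx mulmx1 -!scalemxAl -!scalemxAr mul1mx mulmxA.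
  rewrite -[w *m w^T *m w]mulmxA (mx11_scalar (w^T *m w)) -/s mul_mx_scalar.
  rewrite -scalemxAl !scalerA.
  have -> : c * (c * s) = 2 * c.
    have [s0|s_neq0] := eqVneq s 0; first by rewrite /c s0 invr0 !mulr0.
    by rewrite /c; field.
  by apply/matrixP => i j; rewrite !mxE; ring.
- rewrite -/e mulmxBl mul1mx -scalemxAl -mulmxA we mul_mx_scalar scalerA.
  have [p1|p1] := eqVneq (1 - p) 0.
    have w0 : w = 0 by apply: trmx_mul_self_eq0; rewrite -/s sE p1 mulr0.
    by apply/eqP; rewrite w0 scaler0 subr0 -subr_eq0 -/w w0.
  have -> : c * (1 - p) = 1 by rewrite /c sE; field.
  by rewrite scale1r /w opprB addrC subrK.
Qed.

Lemma symmetric_eigen_e0_block n (M : 'M[R]_(1 + n)) mu :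
  M^T = M -> col 0 M = mu *: delta_mx 0 0 ->
  M = block_mx (mu%:M : 'M_1) 0 0 (drsubmx M).
Proof.
move=> Msym Me0; have lshift0 : lshift n (0 : 'I_1) = 0 by apply: val_inj.
have Mcol0 i : M i 0 = mu * (i == 0)%:R.
  by have /matrixP/(_ i 0) := Me0; rewrite !mxE andbT.
have Mrow0 j : M 0 j = mu * (j == 0)%:R by rewrite -Mcol0 -{1}Msym mxE.
rewrite -{1}(submxK M); congr block_mx; apply/matrixP => i j; rewrite !ord1 !mxE lshift0.
- by rewrite Mcol0 eqxx mulr1.
- by rewrite Mrow0 mulr_natr.
- by rewrite Mcol0 mulr_natr.
Qed.

(* Conjugating by a Householder reflection that sends [e_0] to a unit eigenvector
   splits off a 1 x 1 block; induct on the remaining block. *)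
Theorem symmetric_spectral n (D : 'M[R]_n) : D^T = D ->
  exists U : 'M[R]_n, exists a : 'rV[R]_n,
    U^T *m U = 1%:M /\ D = U *m diag_mx a *m U^T.
Proof.
elim: n D => [|n IH] D Dsym.
  by exists 1%:M, 0; split; [rewrite trmx1 mulmx1 | apply/matrixP => -[]].
move: D Dsym; rewrite -[n.+1]/(1 + n)%N => D Dsym.
have [u uu [mu Du]] := symmetric_unit_eigenvector Dsym.
have [H [Hsym HH He0]] : exists H : 'M_(1 + n),
    [/\ H^T = H, H *m H = 1%:M & H *m delta_mx 0 0 = u] := householder uu.
pose M : 'M[R]_(1 + n) := H *m D *m H.
have Msym : M^T = M by rewrite /M !trmx_mul Hsym Dsym mulmxA.
have Me0 : col 0 M = mu *: delta_mx 0 0.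
  by rewrite colE /M -!mulmxA He0 Du -scalemxAr -He0 mulmxA HH mul1mx.
have := IH (drsubmx M); rewrite trmx_drsub Msym => /(_ erefl) [V [a [VV D'E]]].
exists (H *m block_mx (1%:M : 'M_1) 0 0 V), (row_mx (mu%:M : 'rV_1) a); split.
  rewrite trmx_mul tr_block_mx !trmx0 trmx1 Hsym mulmxA -(mulmxA _ H H) HH mulmx1.
  by rewrite mulmx_block !mulmx0 !mul0mx mulmx1 !addr0 add0r VV scalar_mx_block.
have -> : D = H *m M *m H by rewrite /M !mulmxA HH mul1mx -mulmxA HH mulmx1.
rewrite (symmetric_eigen_e0_block Msym Me0) D'E diag_mx_row trmx_mul tr_block_mx.
rewrite !trmx0 trmx1 Hsym !mulmxA; congr (_ *m _); rewrite -!mulmxA; congr (_ *m _).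
rewrite !mulmx_block !mulmx0 !mul0mx !mulmx1 !mul1mx !addr0 !add0r mulmx0.
by congr block_mx; apply/matrixP => i j; rewrite !ord1 !mxE.
Qed.

End RealSpectral.

Lemma col_mulmx (F : pzRingType) m n p (A : 'M[F]_(m, n)) (B : 'M[F]_(n, p)) j :
  col j (A *m B) = A *m col j B.
Proof. by rewrite !colE mulmxA. Qed.

Section OrthogonalDiagonal.
Variables (F : fieldType) (n : nat) (U : 'M[F]_n).
Hypothesis UU : U^T *m U = 1%:M.

Lemma trmx_orth_diag (a : 'rV[F]_n) : (U *m diag_mx a *m U^T)^T = U *m diag_mx a *m U^T.
Proof. by rewrite !trmx_mul trmxK tr_diag_mx mulmxA. Qed.

Lemma orth_diag_col (a : 'rV[F]_n) i : (U *m diag_mx a *m U^T) *m col i U = a 0 i *: col i U.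
Proof.
rewrite -col_mulmx -(mulmxA _ U^T U) UU mulmx1.
by apply/matrixP => j k; rewrite mul_mx_diag !mxE mulrC.
Qed.

Lemma orth_diag_eigenbasis (D : 'M[F]_n) (a : 'rV[F]_n) :
  (forall i, D *m col i U = a 0 i *: col i U) -> D = U *m diag_mx a *m U^T.
Proof.
move=> eigD; have DU : D *m U = U *m diag_mx a.
  apply/matrixP => i j; have /matrixP/(_ i 0) := eigD j.
  by rewrite -col_mulmx mul_mx_diag !mxE mulrC.
by rewrite -DU -mulmxA (mulmx1C UU) mulmx1.
Qed.

Lemma mxtrace_orth_diag (a : 'rV[F]_n) : \tr (U *m diag_mx a *m U^T) = \sum_i a 0 i.
Proof. by rewrite mxtrace_mulC mulmxA UU mul1mx mxtrace_diag. Qed.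

Lemma orth_diag_mul (a b : 'rV[F]_n) :
  U *m diag_mx a *m U^T *m (U *m diag_mx b *m U^T)
  = U *m diag_mx (\row_i (a 0 i * b 0 i)) *m U^T.
Proof.
rewrite !mulmxA -[U *m diag_mx a *m U^T *m U]mulmxA UU mulmx1.
by rewrite -[U *m diag_mx a *m diag_mx b]mulmxA mulmx_diag.
Qed.

Lemma orth_diag_range m (a : 'rV[F]_n) (B : 'M[F]_(n, m)) :
  (forall i j, a 0 i = 0 -> B i j = 0) ->
  U *m B = U *m diag_mx a *m U^T *m (U *m diag_mx (map_mx GRing.inv a) *m B).
Proof.
move=> Ba; rewrite !mulmxA -[U *m diag_mx a *m U^T *m U]mulmxA UU mulmx1.
rewrite -!mulmxA; congr (_ *m _); rewrite mulmxA mulmx_diag.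
apply/matrixP => i j; rewrite mul_diag_mx !mxE.
by have [/(Ba i j) ->|a_neq0] := eqVneq (a 0 i) 0; rewrite ?mulr0 ?mulfV ?mul1r.
Qed.

End OrthogonalDiagonal.

Section QuadraticForms.
Variable R : realType.

Lemma dotvE n (u v : 'cV[R]_n) : dotv u v = (u^T *m v) 0 0.
Proof. by rewrite /dotv mxE; apply: eq_bigr => i _; rewrite mxE. Qed.

Lemma dotv_col p q n (A : 'M[R]_(n, p)) (B : 'M[R]_(n, q)) i j :
  dotv (col i A) (col j B) = (A^T *m B) i j.
Proof. by rewrite /dotv mxE; apply: eq_bigr => k _; rewrite !mxE. Qed.

Lemma dotvC n (u v : 'cV[R]_n) : dotv u v = dotv v u.
Proof. by apply: eq_bigr => i _; rewrite mulrC. Qed.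

Lemma dotvDl n (u v w : 'cV[R]_n) : dotv (u + v) w = dotv u w + dotv v w.
Proof. by rewrite /dotv -big_split; apply: eq_bigr => i _; rewrite mxE mulrDl. Qed.

Lemma dotvDr n (u v w : 'cV[R]_n) : dotv w (u + v) = dotv w u + dotv w v.
Proof. by rewrite dotvC dotvDl !(dotvC w). Qed.

Lemma dotvZl n k (u v : 'cV[R]_n) : dotv (k *: u) v = k * dotv u v.
Proof. by rewrite /dotv mulr_sumr; apply: eq_bigr => i _; rewrite mxE mulrA. Qed.

Lemma dotvZr n k (u v : 'cV[R]_n) : dotv v (k *: u) = k * dotv v u.
Proof. by rewrite dotvC dotvZl dotvC. Qed.

Lemma dotv_mulmxl n p (A : 'M[R]_(n, p)) u v : dotv (A *m u) v = dotv u (A^T *m v).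
Proof. by rewrite !dotvE trmx_mul mulmxA. Qed.

Lemma dotv_mulmxr n p (A : 'M[R]_(p, n)) u v : dotv u (A *m v) = dotv (A^T *m u) v.
Proof. by rewrite dotvC dotv_mulmxl dotvC. Qed.

Lemma dotv_diag n (a : 'rV[R]_n) v : dotv v (diag_mx a *m v) = \sum_i a 0 i * v i 0 ^+ 2.
Proof. by apply: eq_bigr => i _; rewrite mul_diag_mx mxE; ring. Qed.

Lemma dotv_self_eq0 n (v : 'cV[R]_n) : dotv v v = 0 -> v = 0.
Proof. by rewrite dotvE; apply: trmx_mul_self_eq0. Qed.

Lemma psd_dotv_ge0 n (D : 'M[R]_n) v : psd D -> 0 <= dotv v (D *m v).
Proof. by case=> _ D_ge0; rewrite dotvE mulmxA. Qed.

Lemma psdZ n c (D : 'M[R]_n) : 0 <= c -> psd D -> psd (c *: D).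
Proof.
move=> c_ge0 [Dsym D_ge0]; split=> [|v]; first by rewrite linearZ /= Dsym.
by rewrite -mulmxA -scalemxAl -dotvE dotvZr mulr_ge0 // dotvE mulmxA.
Qed.

Lemma psdD n (D1 D2 : 'M[R]_n) : psd D1 -> psd D2 -> psd (D1 + D2).
Proof.
move=> psd1 psd2; split=> [|v]; first by rewrite linearD /= psd1.1 psd2.1.
by rewrite -mulmxA mulmxDl -dotvE dotvDr addr_ge0 // psd_dotv_ge0.
Qed.

Lemma psd1mx n : psd (1%:M : 'M[R]_n).
Proof.
split=> [|v]; first exact: trmx1.
by rewrite mulmx1 -dotvE sumr_ge0 // => i _; rewrite -expr2 sqr_ge0.
Qed.

Lemma psd_kernel n (D : 'M[R]_n) v : psd D -> dotv v (D *m v) = 0 -> D *m v = 0.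
Proof.
move=> D_psd vDv; suff Dv_orth w : dotv w (D *m v) = 0 by apply/dotv_self_eq0/Dv_orth.
pose a := dotv w (D *m v); pose b := dotv w (D *m w); pose t := - a / (b + 1).
have b_ge0 : 0 <= b by apply: psd_dotv_ge0.
have b1_neq0 : b + 1 != 0 by rewrite gt_eqF ?ltr_wpDl.
have := psd_dotv_ge0 (v + t *: w) D_psd.
rewrite mulmxDr -scalemxAr !dotvDl !dotvDr !dotvZl !dotvZr vDv.
rewrite [dotv v _]dotv_mulmxr D_psd.1 [dotv (D *m v) _]dotvC -/a -/b.
have -> : 0 + t * a + (t * a + t * (t * b)) = - (a ^+ 2 * ((b + 2) / (b + 1) ^+ 2)).
  by rewrite /t; field.
rewrite oppr_ge0 pmulr_lle0 ?divr_gt0 ?exprn_gt0 ?ltr_wpDl // => a2_le0.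
by apply/eqP; rewrite -sqrf_eq0 eq_le a2_le0 sqr_ge0.
Qed.

Lemma psd_orth_diag n (U : 'M[R]_n) (a : 'rV[R]_n) :
  (forall i, 0 <= a 0 i) -> psd (U *m diag_mx a *m U^T).
Proof.
move=> a_ge0; split=> [|v]; first exact: trmx_orth_diag.
rewrite -mulmxA -dotvE -!mulmxA dotv_mulmxr dotv_diag.
by rewrite sumr_ge0 // => i _; rewrite mulr_ge0 ?sqr_ge0.
Qed.

Lemma psd_orth_diag_ge0 n (U : 'M[R]_n) (a : 'rV[R]_n) i : U^T *m U = 1%:M ->
  psd (U *m diag_mx a *m U^T) -> 0 <= a 0 i.
Proof.
move=> UU /(psd_dotv_ge0 (col i U)); rewrite orth_diag_col // dotvZr dotv_col UU.
by rewrite mxE eqxx mulr1.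
Qed.

Lemma psd_spectral n (D : 'M[R]_n) : psd D ->
  exists U : 'M[R]_n, exists a : 'rV[R]_n,
    [/\ U^T *m U = 1%:M, D = U *m diag_mx a *m U^T & forall i, 0 <= a 0 i].
Proof.
move=> D_psd; have [U [a [UU DE]]] := symmetric_spectral D_psd.1.
by exists U, a; split=> // i; apply: psd_orth_diag_ge0 UU _; rewrite -DE.
Qed.

Lemma penrose_orth_diag n (U : 'M[R]_n) (a : 'rV[R]_n) : U^T *m U = 1%:M ->
  penrose (U *m diag_mx a *m U^T) (U *m diag_mx (map_mx GRing.inv a) *m U^T).
Proof.
move=> UU; split; rewrite ?orth_diag_mul ?trmx_orth_diag //.
  congr (_ *m diag_mx _ *m _); apply/rowP => i; rewrite !mxE.
  by have [->|a_neq0] := eqVneq (a 0 i) 0; rewrite ?mul0r // mulfV ?mul1r.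
congr (_ *m diag_mx _ *m _); apply/rowP => i; rewrite !mxE.
by have [->|a_neq0] := eqVneq (a 0 i) 0; rewrite ?invr0 ?mul0r // mulVf ?mul1r.
Qed.

Lemma penrose_pinv n (D : 'M[R]_n) : D^T = D -> penrose D (pinv D).
Proof.
move=> /symmetric_spectral [U [a [UU ->]]]; apply: epsilon_spec.
by exists (U *m diag_mx (map_mx GRing.inv a) *m U^T); apply: penrose_orth_diag.
Qed.

Lemma dotv_pinv n (D : 'M[R]_n) v : D^T = D ->
  dotv (D *m v) (pinv D *m (D *m v)) = dotv v (D *m v).
Proof.
by move=> Dsym; have [DXD _ _ _] := penrose_pinv Dsym; rewrite dotv_mulmxl Dsym !mulmxA DXD.
Qed.

(* Joint convexity of [(D, D v) |-> v^T D v]: expand [(v_k - v)^T D_k (v_k - v) >= 0]. *)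
Lemma psd_quad_convex n (D1 D2 : 'M[R]_n) (v v1 v2 : 'cV[R]_n) lam :
  psd D1 -> psd D2 -> 0 <= lam <= 1 ->
  (lam *: D1 + (1 - lam) *: D2) *m v = lam *: (D1 *m v1) + (1 - lam) *: (D2 *m v2) ->
  dotv v ((lam *: D1 + (1 - lam) *: D2) *m v)
  <= lam * dotv v1 (D1 *m v1) + (1 - lam) * dotv v2 (D2 *m v2).
Proof.
move=> psd1 psd2 /andP[lam_ge0 lam_le1] vE; have mu_ge0 : 0 <= 1 - lam by rewrite subr_ge0.
have q_comb : dotv v ((lam *: D1 + (1 - lam) *: D2) *m v)
    = lam * dotv v (D1 *m v) + (1 - lam) * dotv v (D2 *m v).
  by rewrite mulmxDl -!scalemxAl dotvDr !dotvZr.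
have q_cross : dotv v ((lam *: D1 + (1 - lam) *: D2) *m v)
    = lam * dotv v (D1 *m v1) + (1 - lam) * dotv v (D2 *m v2).
  by rewrite vE dotvDr !dotvZr.
have gap (D : 'M[R]_n) w : psd D ->
    0 <= dotv w (D *m w) - 2 * dotv v (D *m w) + dotv v (D *m v).
  move=> D_psd; rewrite [X in 0 <= X](_ : _ = dotv (w - v) (D *m (w - v))).
    exact: psd_dotv_ge0.
  rewrite -scaleN1r mulmxDr -scalemxAr !dotvDl !dotvDr !dotvZl !dotvZr.
  by rewrite [dotv w (D *m v)]dotv_mulmxr D_psd.1 [dotv (D *m w) v]dotvC; ring.
have g1 := mulr_ge0 lam_ge0 (gap D1 v1 psd1).
have g2 := mulr_ge0 mu_ge0 (gap D2 v2 psd2).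
lra.
Qed.

Lemma range_subP d T (W : 'M[R]_(d, T)) (D : 'M[R]_d) :
  range_sub W D <-> exists V, W = D *m V.
Proof.
split=> [Wsub|[V ->] z]; last by exists (V *m z); rewrite mulmxA.
have /fin_all_exists [v Wv] t : exists v, col t W = D *m v.
  by have [v] := Wsub (delta_mx t 0); rewrite -colE; exists v.
exists (\matrix_(i, t) v t i 0); apply/matrixP => i t.
have /matrixP/(_ i 0) := Wv t; rewrite !mxE => ->.
by apply: eq_bigr => k _; rewrite mxE.
Qed.

Lemma range_sub_orth_diag d T (W : 'M[R]_(d, T)) (U : 'M[R]_d) (a : 'rV[R]_d) :
  U^T *m U = 1%:M -> (forall i j, a 0 i = 0 -> (U^T *m W) i j = 0) ->
  range_sub W (U *m diag_mx a *m U^T).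
Proof.
move=> UU Wa; apply/range_subP; exists (U *m diag_mx (map_mx GRing.inv a) *m (U^T *m W)).
by rewrite -orth_diag_range // mulmxA (mulmx1C UU) mul1mx.
Qed.

Lemma range_sub_convex d T (W1 W2 : 'M[R]_(d, T)) (D1 D2 : 'M[R]_d) lam :
  psd D1 -> psd D2 -> 0 <= lam <= 1 -> range_sub W1 D1 -> range_sub W2 D2 ->
  range_sub (lam *: W1 + (1 - lam) *: W2) (lam *: D1 + (1 - lam) *: D2).
Proof.
move=> psd1 psd2 /andP[lam_ge0 lam_le1] /range_subP[V1 ->] /range_subP[V2 ->].
have [psdl1 psdl2] : psd (lam *: D1) /\ psd ((1 - lam) *: D2).
  by split; apply: psdZ; rewrite ?subr_ge0.
have [U [a [UU DE _]]] := psd_spectral (psdD psdl1 psdl2).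
rewrite DE; apply: range_sub_orth_diag => // i j ai0; pose u := col i U.
(* [u] is a null direction of the psd sum, hence of each psd summand. *)
have Du0 : (lam *: D1 + (1 - lam) *: D2) *m u = 0.
  by rewrite DE orth_diag_col // ai0 scale0r.
have q1 := psd_dotv_ge0 u psdl1; have q2 := psd_dotv_ge0 u psdl2.
have : dotv u ((lam *: D1 + (1 - lam) *: D2) *m u) = 0.
  by rewrite Du0 dotvE mulmx0 mxE.
rewrite mulmxDl dotvDr => q12.
have D1u0 : lam *: D1 *m u = 0 by apply: psd_kernel => //; lra.
have D2u0 : (1 - lam) *: D2 *m u = 0 by apply: psd_kernel => //; lra.
rewrite -dotv_col -/u linearD !linearZ /= !col_mulmx !scalemxAl dotvDr !dotv_mulmxr.
by rewrite psdl1.1 psdl2.1 D1u0 D2u0 !dotvE !trmx0 !mul0mx mxE addr0.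
Qed.

Lemma rownorm_ge0 d T (A : 'M[R]_(d, T)) i : 0 <= rownorm A i.
Proof. exact: sqrtr_ge0. Qed.

Lemma norm21_ge0 d T (A : 'M[R]_(d, T)) : 0 <= norm21 A.
Proof. by apply: sumr_ge0 => i _; apply: rownorm_ge0. Qed.

Lemma rownorm_sqr d T (A : 'M[R]_(d, T)) i : rownorm A i ^+ 2 = \sum_j A i j ^+ 2.
Proof. by rewrite sqr_sqrtr // sumr_ge0 // => j _; apply: sqr_ge0. Qed.

Lemma rownorm_eq0 d T (A : 'M[R]_(d, T)) i j : rownorm A i = 0 -> A i j = 0.
Proof.
move=> Ai0; have : \sum_j A i j ^+ 2 = 0 by rewrite -rownorm_sqr Ai0 expr0n.
by move=> /(psumr_eq0P (fun j _ => sqr_ge0 (A i j))) /(_ j isT) /eqP; rewrite sqrf_eq0 => /eqP.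
Qed.

Lemma rownorm_diag_mul d T (a : 'rV[R]_d) (A : 'M[R]_(d, T)) i :
  rownorm (diag_mx a *m A) i = `|a 0 i| * rownorm A i.
Proof.
rewrite /rownorm -sqrtr_sqr -sqrtrM ?sqr_ge0 // mulr_sumr.
by congr Num.sqrt; apply: eq_bigr => j _; rewrite mul_diag_mx mxE exprMn.
Qed.

Definition penalty d T (D : 'M[R]_d) (W : 'M[R]_(d, T)) : R :=
  \sum_(t < T) dotv (col t W) (pinv D *m col t W).

Lemma penalty_orth_diag d T (U : 'M[R]_d) (a : 'rV[R]_d) (V : 'M[R]_(d, T)) :
  U^T *m U = 1%:M ->
  penalty (U *m diag_mx a *m U^T) (U *m diag_mx a *m U^T *m V)
  = \sum_i a 0 i * rownorm (U^T *m V) i ^+ 2.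
Proof.
move=> UU; rewrite /penalty (eq_bigr (fun t => \sum_i a 0 i * (U^T *m V) i t ^+ 2)).
  by rewrite exchange_big; apply: eq_bigr => i _; rewrite rownorm_sqr mulr_sumr.
move=> t _; rewrite col_mulmx dotv_pinv ?trmx_orth_diag // -!mulmxA dotv_mulmxr.
by rewrite dotv_diag; apply: eq_bigr => i _; rewrite -col_mulmx mxE.
Qed.

Lemma norm21_sqr_le_penalty d T (U : 'M[R]_d) (a : 'rV[R]_d) (V : 'M[R]_(d, T)) :
  U^T *m U = 1%:M -> (forall i, 0 <= a 0 i) -> \sum_i a 0 i <= 1 ->
  norm21 (U^T *m (U *m diag_mx a *m U^T *m V)) ^+ 2
  <= penalty (U *m diag_mx a *m U^T) (U *m diag_mx a *m U^T *m V).
Proof.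
move=> UU a_ge0 a_le1; rewrite penalty_orth_diag //.
rewrite !mulmxA UU mul1mx -!mulmxA /norm21.
rewrite (eq_bigr (fun i => a 0 i * rownorm (U^T *m V) i)) => [|i _].
  exact: jensen_sqr.
by rewrite rownorm_diag_mul ger0_norm.
Qed.

Lemma penalty_convex d T (W1 W2 : 'M[R]_(d, T)) (D1 D2 : 'M[R]_d) lam :
  psd D1 -> psd D2 -> 0 <= lam <= 1 -> range_sub W1 D1 -> range_sub W2 D2 ->
  penalty (lam *: D1 + (1 - lam) *: D2) (lam *: W1 + (1 - lam) *: W2)
  <= lam * penalty D1 W1 + (1 - lam) * penalty D2 W2.
Proof.
move=> psd1 psd2 lam01 W1D1 W2D2; move: (lam01) => /andP[lam_ge0 lam_le1].
have /range_subP[V WE] := range_sub_convex psd1 psd2 lam01 W1D1 W2D2.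
move/range_subP: W1D1 => [V1 W1E]; move/range_subP: W2D2 => [V2 W2E].
have psdc : psd (lam *: D1 + (1 - lam) *: D2) by apply: psdD; apply: psdZ; rewrite ?subr_ge0.
rewrite /penalty WE W1E W2E; apply: ler_sum_comb => t.
rewrite !col_mulmx !dotv_pinv ?psdc.1 ?psd1.1 ?psd2.1 //; apply: psd_quad_convex => //.
by rewrite -!col_mulmx -WE W1E W2E linearD !linearZ.
Qed.

(* For [A = 0] every weight is [0 / 0 = 0], so [Dhat U A = 0]. *)
Definition Dhat d T (U : 'M[R]_d) (A : 'M[R]_(d, T)) : 'M[R]_d :=
  U *m diag_mx (\row_i (rownorm A i / norm21 A)) *m U^T.

Section DhatProperties.
Variables (d T : nat) (U : 'M[R]_d) (A : 'M[R]_(d, T)).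
Hypothesis UU : U^T *m U = 1%:M.

Lemma psd_Dhat : psd (Dhat U A).
Proof. by apply: psd_orth_diag => i; rewrite mxE divr_ge0 ?rownorm_ge0 ?norm21_ge0. Qed.

Lemma mxtrace_Dhat : \tr (Dhat U A) <= 1.
Proof.
rewrite mxtrace_orth_diag // (eq_bigr (fun i => rownorm A i / norm21 A)) => [|i _]; last first.
  by rewrite mxE.
rewrite -mulr_suml -/(norm21 A).
by have [->|s_neq0] := eqVneq (norm21 A) 0; rewrite ?mul0r ?mulfV.
Qed.

Lemma Dhat_weight0 i j : (\row_i (rownorm A i / norm21 A)) 0 i = 0 -> A i j = 0.
Proof.
rewrite mxE => /eqP; rewrite mulf_eq0 invr_eq0 => /orP[/eqP/rownorm_eq0 //|/eqP s0].
apply: rownorm_eq0; move: s0; rewrite /norm21.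
by move=> /(psumr_eq0P (fun k _ => rownorm_ge0 A k)) /(_ i isT).
Qed.

Lemma range_sub_Dhat : range_sub (U *m A) (Dhat U A).
Proof.
apply: range_sub_orth_diag => // i j /Dhat_weight0 Aij0.
by rewrite mulmxA UU mul1mx Aij0.
Qed.

Lemma penalty_Dhat : penalty (Dhat U A) (U *m A) = norm21 A ^+ 2.
Proof.
rewrite /Dhat (orth_diag_range UU (fun i j => @Dhat_weight0 i j)) penalty_orth_diag //.
rewrite !mulmxA UU mul1mx expr2 {2}/norm21 mulr_sumr.
apply: eq_bigr => i _; rewrite rownorm_diag_mul !mxE.
have [s0|s_neq0] := eqVneq (norm21 A) 0; first by rewrite s0 invr0 !mulr0 !mul0r.
have [r0|r_neq0] := eqVneq (rownorm A i) 0; first by rewrite r0 !mul0r mulr0.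
rewrite -/(norm21 A) ger0_norm ?invr_ge0 ?divr_ge0 ?rownorm_ge0 ?norm21_ge0 //.
by field; rewrite s_neq0 r_neq0.
Qed.

End DhatProperties.

End QuadraticForms.

Section Equivalence.
Context {R : realType} {T d : nat} {m : 'I_T -> nat}
  {x : forall t : 'I_T, 'I_(m t) -> 'cV[R]_d}
  {y : forall t : 'I_T, 'I_(m t) -> R}
  {l : R -> R -> R} {gamma beta : R}.
Local Notation objP := (objP R T d m x y l gamma beta).
Local Notation objC := (objC R T d m x y l gamma beta).
Local Notation feasibleC := (feasibleC R T d).
Hypotheses (gammaT_ge0 : 0 <= gamma / T%:R) (beta_ge0 : 0 <= beta).

Definition loss (W : 'M[R]_(d, T)) (w0 : 'cV[R]_d) : R :=
  \sum_(t < T) \sum_(i < m t) l (@y t i) (dotv (col t W + w0) (@x t i)).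

Lemma objPE A a0 (U : 'M[R]_d) : objP A a0 U
  = loss (U *m A) (U *m a0) + gamma / T%:R * norm21 A ^+ 2 + beta * dotv a0 a0.
Proof.
rewrite /objP /loss; congr (_ + _ + _); apply: eq_bigr => t _; apply: eq_bigr => i _.
by rewrite col_mulmx -mulmxDr dotv_mulmxl.
Qed.

Lemma objCE W w0 D :
  objC W w0 D = loss W w0 + gamma / T%:R * penalty D W + beta * dotv w0 w0.
Proof. by []. Qed.

Lemma objP_le_objC W w0 (U : 'M[R]_d) (a : 'rV[R]_d) : U^T *m U = 1%:M ->
  feasibleC W w0 (U *m diag_mx a *m U^T) ->
  objP (U^T *m W) (U^T *m w0) U <= objC W w0 (U *m diag_mx a *m U^T).
Proof.
move=> UU [trD [/range_subP[V WE] D_psd]]; have UUt := mulmx1C UU.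
have a_ge0 i : 0 <= a 0 i by apply: psd_orth_diag_ge0 UU D_psd.
rewrite objPE objCE !mulmxA UUt !mul1mx dotv_mulmxl trmxK mulmxA UUt mul1mx.
rewrite lerD2r lerD2l ler_wpM2l // WE norm21_sqr_le_penalty //.
by rewrite -(mxtrace_orth_diag UU).
Qed.

Lemma feasibleC_Dhat A a0 (U : 'M[R]_d) : U^T *m U = 1%:M ->
  feasibleC (U *m A) (U *m a0) (Dhat U A).
Proof.
by move=> UU; split; [|split]; [exact: mxtrace_Dhat | exact: range_sub_Dhat | exact: psd_Dhat].
Qed.

Lemma objC_Dhat A a0 (U : 'M[R]_d) : U^T *m U = 1%:M ->
  objC (U *m A) (U *m a0) (Dhat U A) = objP A a0 U.
Proof. by move=> UU; rewrite objCE objPE penalty_Dhat // dotv_mulmxl mulmxA UU mul1mx. Qed.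

Lemma feasibleC_convex W1 w1 D1 W2 w2 D2 lam :
  feasibleC W1 w1 D1 -> feasibleC W2 w2 D2 -> 0 <= lam <= 1 ->
  feasibleC (lam *: W1 + (1 - lam) *: W2) (lam *: w1 + (1 - lam) *: w2)
            (lam *: D1 + (1 - lam) *: D2).
Proof.
move=> [tr1 [W1D1 psd1]] [tr2 [W2D2 psd2]] lam01; move: (lam01) => /andP[lam_ge0 lam_le1].
have mu_ge0 : 0 <= 1 - lam by rewrite subr_ge0.
split; [|split; [exact: range_sub_convex | by apply: psdD; apply: psdZ]].
rewrite mxtraceD !mxtraceZ.
have := ler_wpM2l lam_ge0 tr1; have := ler_wpM2l mu_ge0 tr2; lra.
Qed.

Lemma objC_convex W1 w1 D1 W2 w2 D2 lam : convex_in_2nd l ->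
  feasibleC W1 w1 D1 -> feasibleC W2 w2 D2 -> 0 <= lam <= 1 ->
  objC (lam *: W1 + (1 - lam) *: W2) (lam *: w1 + (1 - lam) *: w2)
       (lam *: D1 + (1 - lam) *: D2)
  <= lam * objC W1 w1 D1 + (1 - lam) * objC W2 w2 D2.
Proof.
move=> lconv [_ [W1D1 psd1]] [_ [W2D2 psd2]] lam01.
have loss_convex : loss (lam *: W1 + (1 - lam) *: W2) (lam *: w1 + (1 - lam) *: w2)
    <= lam * loss W1 w1 + (1 - lam) * loss W2 w2.
  apply: ler_sum_comb => t; apply: ler_sum_comb => i.
  have -> : col t (lam *: W1 + (1 - lam) *: W2) + (lam *: w1 + (1 - lam) *: w2)
      = lam *: (col t W1 + w1) + (1 - lam) *: (col t W2 + w2).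
    by apply/matrixP => j k; rewrite !mxE; ring.
  by rewrite (dotvDl (lam *: _)) !(dotvZl _ (col t _ + _)); apply: lconv.
have sqr_convex : dotv (lam *: w1 + (1 - lam) *: w2) (lam *: w1 + (1 - lam) *: w2)
    <= lam * dotv w1 w1 + (1 - lam) * dotv w2 w2.
  have I1 : lam *: 1%:M + (1 - lam) *: 1%:M = 1%:M :> 'M[R]_d.
    by rewrite -scalerDl addrC subrK scale1r.
  have := psd_quad_convex (v := lam *: w1 + (1 - lam) *: w2) (v1 := w1) (v2 := w2)
    (psd1mx R d) (psd1mx R d) lam01.
  by rewrite I1 !mul1mx; apply.
have := ler_wpM2l gammaT_ge0 (penalty_convex psd1 psd2 lam01 W1D1 W2D2).
have := ler_wpM2l beta_ge0 sqr_convex.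
rewrite !objCE; lra.
Qed.

End Equivalence.

Theorem theorem1 (R : realType) (T d : nat) (m : 'I_T -> nat)
  (x : forall t : 'I_T, 'I_(m t) -> 'cV[R]_d)
  (y : forall t : 'I_T, 'I_(m t) -> R)
  (l : R -> R -> R) (gamma beta : R) :
  (1 <= T)%N -> (1 <= d)%N -> 0 < gamma -> 0 < beta ->
  convex_in_2nd l ->
  [/\ @convex_problemC R T d m x y l gamma beta,
      (forall (W : 'M[R]_(d, T)) (w0 : 'cV[R]_d) (D U : 'M[R]_d),
         @optimalC R T d m x y l gamma beta W w0 D ->
         orthogonal_mx U ->
         (forall i : 'I_d, exists lam : R, D *m col i U = lam *: col i U) ->
         @optimalP R T d m x y l gamma beta (U^T *m W) (U^T *m w0) U)
    & (forall (A : 'M[R]_(d, T)) (a0 : 'cV[R]_d) (U : 'M[R]_d),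
         @optimalP R T d m x y l gamma beta A a0 U ->
         @optimalC R T d m x y l gamma beta (U *m A) (U *m a0)
           (U *m diag_mx (\row_(i < d) (rownorm A i / norm21 A)) *m U^T))].
Proof.
move=> _ _ gamma_gt0 /ltW beta_ge0 lconv.
have gammaT_ge0 : 0 <= gamma / T%:R by rewrite divr_ge0 ?ler0n ?ltW.
split.
- move=> W1 w1 D1 W2 w2 D2 lam F1 F2 lam01.
  by split; [exact: feasibleC_convex | exact: objC_convex].
- move=> W w0 D U [FC optC] UU /fin_all_exists [f eigD].
  have DE : D = U *m diag_mx (\row_i f i) *m U^T.
    by apply: orth_diag_eigenbasis => // i; rewrite mxE.
  rewrite DE in FC optC; split=> // A a0 U' U'U'.
  apply: le_trans (objP_le_objC gammaT_ge0 UU FC) _.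
  by rewrite -(objC_Dhat A a0 U'U'); apply/optC/feasibleC_Dhat.
- move=> A a0 U [UU optP]; split; first exact: feasibleC_Dhat.
  move=> W w0 D FC; have [U' [a [U'U' DE _]]] := psd_spectral FC.2.2.
  rewrite DE in FC *; rewrite (objC_Dhat A a0 UU).
  exact: le_trans (optP _ _ _ U'U') (objP_le_objC gammaT_ge0 U'U' FC).
Qed.
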